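(* Let $T=(V,E)$ be a finite rooted tree with nonnegative partial costs, and $\Pr$ a probability distribution over a finite set of queries. The benefit function $B:2^V\to\mathbb{R}_{\ge0}$ is monotone (non-decreasing) and submodular.
   Context: $T=(V,E)$ is a finite rooted tree; $T(u)$ is the set of nodes of the subtree rooted at $u$ (including $u$); $A(u)$ the set of proper ancestors of $u$. Each non-leaf node is associated with a variable of a finite set $X$; $\mathrm{vars}(u)$ is the set of variables of nodes of $T(u)$; each query $q$ determines $Z_q\subseteq X$. For $R\subseteq V$, $w\in V$: $I_q(w,R)=1$ iff $w\in R$, $\mathrm{vars}(w)\subseteq Z_q$, and no $x\in A(w)\cap R$ has $\mathrm{vars}(x)\subseteq Z_q$; else $0$; $\mathbb{E}[I(w,R)]=\sum_q\Pr(q)I_q(w,R)$. Each node $x$ has partial cost $c(x)\ge0$, total cost $C(w)=\sum_{x\in T(w)}c(x)$. Benefit: $B(R)=\sum_{w\in R}\mathbb{E}[I(w,R)]C(w)$. *)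

From HB Require Import structures.
From mathcomp Require Import all_boot all_order all_algebra.
Set Implicit Arguments. Unset Strict Implicit. Unset Printing Implicit Defensive.
Import Order.TTheory GRing.Theory Num.Theory.
Local Open Scope ring_scope.

Section TreeBenefit.
Variables (V X Q : finType) (parent : V -> V).

(* A rooted tree is given by a root and a parent map with parent root = root
   and every node reaching the root by iterating parent (see the theorem's
   hypotheses).  u is a proper ancestor of w. *)
Definition anc (w : V) : {set V} :=
  [set u | [exists k : 'I_#|V|.+1, (0 < (k : nat))%N && (iter k parent w == u)]
           && (u != w)].

Definition subtree (u : V) : {set V} := [set w | (w == u) || (u \in anc w)].

Definition is_leaf (u : V) : bool := [forall w, (w != u) ==> (parent w != u)].

Variable var : V -> X. (* only meaningful on non-leaf nodes *)

Definition vars (u : V) : {set X} :=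
  [set var x | x in [set y in subtree u | ~~ is_leaf y]].

Variable Z : Q -> {set X}.

Definition Iq (q : Q) (w : V) (R : {set V}) : bool :=
  [&& w \in R, vars w \subset Z q &
      [forall x, ((x \in anc w) && (x \in R)) ==> ~~ (vars x \subset Z q)]].

Variables (F : realFieldType) (Pr : Q -> F) (c : V -> F).

Definition EI (w : V) (R : {set V}) : F := \sum_(q : Q) Pr q * (Iq q w R)%:R.

Definition Ctot (w : V) : F := \sum_(x in subtree w) c x.

Definition benefit (R : {set V}) : F := \sum_(w in R) EI w R * Ctot w.

End TreeBenefit.

From HB Require Import structures.
From mathcomp Require Import all_boot all_order all_algebra.
Import Order.TTheory GRing.Theory Num.Theory.

Set Implicit Arguments.
Unset Strict Implicit.

(* For a query q call a node usable when all variables of its subtree lie in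
   Z q.  Then I_q(w, R) = 1 exactly when w is a topmost usable node of R.  The
   proper ancestors of a node form a chain, so a node x lying in the subtree of
   some usable node of R lies below exactly one topmost one; summing the costs
   C(w) = sum_(x in T(w)) c x therefore counts each covered x once, and
   B(R) = sum_q Pr q * sum_x c x * [x is covered by a usable node of R].
   Each such coverage indicator turns unions into disjunctions, hence is
   monotone and submodular, and nonnegative combinations preserve both
   properties. *)

Section ParentMap.
Variables (V : finType) (parent : V -> V).

Lemma fconnect_parent x y :
  fconnect parent x y -> x != y -> fconnect parent (parent x) y.
Proof.
move=> /iter_findex <-; case: findex => [|n]; first by rewrite eqxx.
by rewrite iterSr fconnect_iter.
Qed.

Lemma fconnect_comparable x u1 u2 :
  fconnect parent x u1 -> fconnect parent x u2 ->
  fconnect parent u1 u2 || fconnect parent u2 u1.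
Proof.
move=> /iter_findex <- /iter_findex <-.
set i := findex _ _ _; set j := findex _ _ _.
wlog lij : i j / (i <= j)%N => [hwlog|].
  by case: (leqP i j) => [/hwlog // | /ltnW /hwlog]; rewrite orbC.
by rewrite -(subnK lij) iterD fconnect_iter.
Qed.

Lemma ancE w u :
  (u \in anc parent w) = fconnect parent (parent w) u && (u != w).
Proof.
rewrite inE; congr (_ && _); apply/existsP/idP => [[k /andP[k_gt0 /eqP <-]] | ].
  by rewrite -(prednK k_gt0) iterSr fconnect_iter.
move=> /[dup] /findex_max /leq_trans /(_ (max_card _)) + /iter_findex.
set k := findex _ _ _ => k_lt iter_k.
by exists (Ordinal (k_lt : k.+1 < #|V|.+1)%N); rewrite /= -iterS iterSr iter_k.
Qed.

Lemma subtreeE u x : (x \in subtree parent u) = fconnect parent x u.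
Proof.
rewrite inE ancE eq_sym; have [-> | neq_xu] /= := eqVneq x u; first by rewrite connect0.
rewrite andbT; apply/idP/idP => [|/fconnect_parent/(_ neq_xu) //].
exact/connect_trans/fconnect1.
Qed.

Lemma subtree_comparable x u1 u2 :
  x \in subtree parent u1 -> x \in subtree parent u2 -> u1 != u2 ->
  (u1 \in anc parent u2) || (u2 \in anc parent u1).
Proof.
rewrite !subtreeE !ancE => xu1 xu2 neq_u12.
case/orP: (fconnect_comparable xu1 xu2) => /fconnect_parent.
  by move/(_ neq_u12) => ->; rewrite [u2 == u1]eq_sym neq_u12 orbT.
by rewrite eq_sym neq_u12 => /(_ isT) ->.
Qed.

Definition topmost (S : {set V}) (w : V) : bool :=
  (w \in S) && [forall y in anc parent w, y \notin S].

Definition covered (S : {set V}) (x : V) : bool :=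
  [exists w in S, x \in subtree parent w].

Lemma coveredU S1 S2 x : covered (S1 :|: S2) x = covered S1 x || covered S2 x.
Proof.
apply/existsP/orP => [[w /andP[] /setUP[] wS xw] | [] /existsP[w /andP[wS xw]]].
- by left; apply/existsP; exists w; rewrite wS.
- by right; apply/existsP; exists w; rewrite wS.
all: by exists w; rewrite inE wS ?orbT.
Qed.

End ParentMap.

Section RootedTree.
Variables (V : finType) (parent : V -> V) (root : V).
Hypotheses (parent_root : parent root = root)
  (reach_root : forall v, exists k, iter k parent v = root).

Lemma iter_root n : iter n parent root = root.
Proof. by elim: n => //= n ->. Qed.

Lemma parent_acyclic x : fconnect parent (parent x) x -> x = root.
Proof.
move=> /iter_findex; set n := findex _ _ _; rewrite -iterSr => cycle_x.
have iter_mul m : iter (n.+1 * m) parent x = x.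
  by elim: m => [|m IH]; rewrite ?muln0 // mulnS iterD IH cycle_x.
have [k iter_k] := reach_root x.
by rewrite -(iter_mul k) -(subnK (leq_pmull k (ltn0Sn n))) iterD iter_k iter_root.
Qed.

Lemma anc_trans w u y : u \in anc parent w -> y \in anc parent u -> y \in anc parent w.
Proof.
rewrite !ancE => /andP[wu neq_uw] /andP[uy neq_yu].
have wy := connect_trans wu (connect_trans (fconnect1 parent u) uy).
rewrite wy; apply: contraNneq neq_uw => eq_yw; move: wy wu; rewrite eq_yw.
move=> /parent_acyclic ->; rewrite parent_root => /iter_findex <-.
by rewrite iter_root.
Qed.

Lemma anc_proper w y : y \in anc parent w -> anc parent y \proper anc parent w.
Proof.
move=> yw; apply/properP; split; last by exists y; rewrite // ancE eqxx andbF.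
by apply/subsetP => z; apply: anc_trans.
Qed.

Lemma exists_topmost S x :
  covered parent S x -> exists2 w, topmost parent S w & x \in subtree parent w.
Proof.
case/existsP => w0 cov_w0.
have [w /andP[wS xw] min_w] := @arg_minnP _ w0
  [pred w | (w \in S) && (x \in subtree parent w)] (fun w => #|anc parent w|) cov_w0.
exists w => //; rewrite /topmost wS; apply/forall_inP => y yw; apply/negP => yS.
have xy : x \in subtree parent y.
  move: xw (yw); rewrite !subtreeE ancE => xw /andP[pw_y _].
  exact: connect_trans xw (connect_trans (fconnect1 _ w) pw_y).
by have := min_w y; rewrite /= yS xy leqNgt proper_card ?anc_proper // => /(_ isT).
Qed.

Lemma topmost_unique S x w1 w2 :
  topmost parent S w1 -> topmost parent S w2 ->
  x \in subtree parent w1 -> x \in subtree parent w2 -> w1 = w2.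
Proof.
move=> /andP[w1S /forall_inP top1] /andP[w2S /forall_inP top2] xw1 xw2.
apply/eqP; apply: contraT => /(subtree_comparable xw1 xw2) /orP[/top2 | /top1].
  by rewrite w1S.
by rewrite w2S.
Qed.

Lemma sum_topmost_subtree S x :
  \sum_w (topmost parent S w && (x \in subtree parent w)) = covered parent S x.
Proof.
have [/exists_topmost[w top_w xw] | uncovered] := boolP (covered parent S x).
  rewrite (bigD1 w) ?top_w ?xw //= big1 // => w' neq_w'w.
  apply/eqP; rewrite eqb0; apply: contra neq_w'w => /andP[top' xw'].
  by rewrite (topmost_unique top' top_w xw' xw).
apply: big1 => w _; apply/eqP; rewrite eqb0.
apply: contra uncovered => /andP[/andP[wS _] xw].
by apply/existsP; exists w; rewrite wS.
Qed.

End RootedTree.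

Local Open Scope ring_scope.

Section SetFunctions.
Variables (V : finType) (F : numDomainType).

Definition submodular (f : {set V} -> F) : Prop :=
  forall (A B : {set V}) (v : V), A \subset B -> f (v |: B) - f B <= f (v |: A) - f A.

Lemma homo_sum_nonneg (I : finType) (w : I -> F) (f : I -> {set V} -> F) :
  (forall i, 0 <= w i) -> (forall i, {homo f i : A B / A \subset B >-> A <= B}) ->
  {homo (fun A => \sum_i w i * f i A) : A B / A \subset B >-> A <= B}.
Proof.
by move=> w_ge0 f_homo A B sAB; apply: ler_sum => i _; rewrite ler_wpM2l ?f_homo.
Qed.

Lemma submodular_sum_nonneg (I : finType) (w : I -> F) (f : I -> {set V} -> F) :
  (forall i, 0 <= w i) -> (forall i, submodular (f i)) ->
  submodular (fun A => \sum_i w i * f i A).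
Proof.
move=> w_ge0 f_sub A B v sAB; rewrite -!sumrB; apply: ler_sum => i _.
by rewrite -!mulrBr ler_wpM2l ?f_sub.
Qed.

Variable b : {set V} -> bool.
Hypothesis bU : forall A B, b (A :|: B) = b A || b B.

Lemma join_indicator_homo :
  {homo (fun A => (b A)%:R : F) : A B / A \subset B >-> A <= B}.
Proof. by move=> A B /setUidPr <-; rewrite bU ler_nat; case: (b A). Qed.

Lemma join_indicator_submodular : submodular (fun A => (b A)%:R).
Proof.
move=> A B v /setUidPr <-; rewrite !bU.
by case: (b [set v]) (b A) (b B) => [] [] [] /=; rewrite ?subrr ?subr0 ?lexx ?ler01.
Qed.

End SetFunctions.

Section Benefit.
Variables (V X Q : finType) (parent : V -> V) (root : V).
Hypotheses (parent_root : parent root = root)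
  (reach_root : forall v, exists k, iter k parent v = root).
Variables (var : V -> X) (Z : Q -> {set X}).
Variables (F : realFieldType) (Pr : Q -> F) (c : V -> F).

Definition usable (q : Q) (R : {set V}) : {set V} :=
  [set y in R | vars parent var y \subset Z q].

Lemma usableU q A B : usable q (A :|: B) = usable q A :|: usable q B.
Proof. by apply/setP => y; rewrite !inE andb_orl. Qed.

Lemma Iq_topmost q w R : Iq parent var Z q w R = topmost parent (usable q R) w.
Proof.
rewrite /Iq /topmost inE andbA; congr (_ && _).
apply: eq_forallb => y.
by rewrite [y \in usable _ _]inE; case: (y \in anc parent w); case: (y \in R).
Qed.

Lemma sum_topmost_Ctot S :
  \sum_w (topmost parent S w)%:R * Ctot parent c w =
  \sum_x c x * (covered parent S x)%:R.
Proof.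
under eq_bigr do rewrite mulr_sumr big_mkcond /=.
rewrite exchange_big /=; apply: eq_bigr => x _.
rewrite -(sum_topmost_subtree parent_root reach_root) natr_sum mulr_sumr.
apply: eq_bigr => w _.
by case: (topmost _ _ _); case: (x \in _); rewrite ?mulr0 ?mulr1 ?mul1r ?mul0r.
Qed.

Definition query_benefit (q : Q) (R : {set V}) : F :=
  \sum_x c x * (covered parent (usable q R) x)%:R.

Lemma benefit_coverage R :
  benefit parent var Z Pr c R = \sum_q Pr q * query_benefit q R.
Proof.
rewrite /benefit /EI; under eq_bigr do rewrite mulr_suml.
rewrite exchange_big /=; apply: eq_bigr => q _.
rewrite /query_benefit -sum_topmost_Ctot mulr_sumr big_mkcond /=.
apply: eq_bigr => w _; rewrite Iq_topmost -mulrA; case: ifP => // wR.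
by rewrite /topmost inE wR /= !mul0r mulr0.
Qed.

Lemma covered_usableU q x A B :
  covered parent (usable q (A :|: B)) x =
  covered parent (usable q A) x || covered parent (usable q B) x.
Proof. by rewrite usableU coveredU. Qed.

Hypotheses (Pr_ge0 : forall q, 0 <= Pr q) (c_ge0 : forall x, 0 <= c x).

Lemma query_benefit_homo q :
  {homo query_benefit q : A B / A \subset B >-> A <= B}.
Proof.
pose cover_ind x A : F := (covered parent (usable q A) x)%:R.
apply: (homo_sum_nonneg (f := cover_ind)) => // x.
exact/join_indicator_homo/covered_usableU.
Qed.

Lemma query_benefit_submodular q : submodular (query_benefit q).
Proof.
pose cover_ind x A : F := (covered parent (usable q A) x)%:R.
apply: (submodular_sum_nonneg (f := cover_ind)) => // x.
exact/join_indicator_submodular/covered_usableU.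
Qed.

Lemma benefit_homo :
  {homo benefit parent var Z Pr c : A B / A \subset B >-> A <= B}.
Proof.
move=> A B sAB; rewrite !benefit_coverage.
exact: (homo_sum_nonneg (f := query_benefit) Pr_ge0 query_benefit_homo).
Qed.

Lemma benefit_submodular : submodular (benefit parent var Z Pr c).
Proof.
move=> A B v sAB; rewrite !benefit_coverage.
exact: (submodular_sum_nonneg (f := query_benefit) Pr_ge0 query_benefit_submodular).
Qed.

End Benefit.

Theorem lemma7 (F : realFieldType) (V X Q : finType)
  (root : V) (parent : V -> V)
  (hroot : parent root = root)
  (hreach : forall v : V, exists k : nat, iter k parent v = root)
  (var : V -> X) (Z : Q -> {set X})
  (Pr : Q -> F) (hPr0 : forall q, 0 <= Pr q) (hPr1 : \sum_(q : Q) Pr q = 1)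
  (c : V -> F) (hc : forall x, 0 <= c x) :
  let B := benefit parent var Z Pr c in
  (forall R1 R2 : {set V}, R1 \subset R2 -> B R1 <= B R2) /\
  (forall (R1 R2 : {set V}) (v : V), R1 \subset R2 -> v \notin R2 ->
     B (v |: R2) - B R2 <= B (v |: R1) - B R1).
Proof.
split=> [R1 R2 | R1 R2 v sR12 _].
  exact: (benefit_homo hroot hreach).
exact: (benefit_submodular hroot hreach).
Qed.
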